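(* Let $\mathfrak{A} = (A; \mathcal{I})$ be a countable structure and $T$ a first-order theory consisting of $\Pi_2$ sentences, both over the same signature $\sigma$. Then either $|\mathrm{Sub}(\mathfrak{A}, T)| \leq \aleph_0$ or $|\mathrm{Sub}(\mathfrak{A}, T)| = 2^{\aleph_0}$.
   Context: $\mathrm{Sub}(\mathfrak A,T)$ is the set of all substructures $\mathfrak B$ of $\mathfrak A$ with $\mathfrak B\models T$. A structure $(A;\mathcal I)$, where $\mathcal I$ interprets the signature $\mathrm{dom}(\mathcal I)$, is countable iff $\max\{|A|,|\mathcal I|\}$ is countable. *)

From mathcomp Require Import all_boot.
From mathcomp Require Import boolp classical_sets cardinality.

Set Implicit Arguments.
Unset Strict Implicit.
Unset Printing Implicit Defensive.

Local Open Scope classical_set_scope.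

(* A (one-sorted, first-order) signature: function symbols (constants are the
   0-ary ones) and relation symbols, each with an arity.  Equality is built in. *)
Record signature := Signature {
  funsym : Type;
  relsym : Type;
  farity : funsym -> nat;
  rarity : relsym -> nat }.

Section FOL.
Variable sg : signature.

(* Terms, variables as de Bruijn indices. *)
Inductive term : Type :=
| Var : nat -> term
| App : forall f : funsym sg, ('I_(farity f) -> term) -> term.

Inductive form : Type :=
| FFalse : form
| FEq : term -> term -> form
| FRel : forall r : relsym sg, ('I_(rarity r) -> term) -> form
| FNot : form -> form
| FAnd : form -> form -> form
| FOr : form -> form -> form
| FImp : form -> form -> form
| FAll : form -> form
| FEx : form -> form.

Fixpoint term_bound (k : nat) (t : term) : Prop :=
  match t with
  | Var n => (n < k)%N
  | App f ts => forall i, term_bound k (ts i)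
  end.

Fixpoint form_bound (k : nat) (phi : form) : Prop :=
  match phi with
  | FFalse => True
  | FEq t1 t2 => term_bound k t1 /\ term_bound k t2
  | FRel r ts => forall i, term_bound k (ts i)
  | FNot p => form_bound k p
  | FAnd p q | FOr p q | FImp p q => form_bound k p /\ form_bound k q
  | FAll p | FEx p => form_bound k.+1 p
  end.

Definition sentence (phi : form) : Prop := form_bound 0 phi.

Fixpoint qfree (phi : form) : Prop :=
  match phi with
  | FFalse | FEq _ _ | FRel _ _ => True
  | FNot p => qfree p
  | FAnd p q | FOr p q | FImp p q => qfree p /\ qfree q
  | FAll _ | FEx _ => False
  end.

Definition Pi2_sentence (phi : form) : Prop :=
  sentence phi /\
  exists (n m : nat) (psi : form),
    qfree psi /\ phi = iter n FAll (iter m FEx psi).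

Record structure := Structure {
  carrier : Type;
  ifun : forall f : funsym sg, ('I_(farity f) -> carrier) -> carrier;
  irel : forall r : relsym sg, ('I_(rarity r) -> carrier) -> Prop }.

Section Semantics.
Variable M : structure.

Definition scons (a : carrier M) (env : nat -> carrier M) : nat -> carrier M :=
  fun n => match n with 0 => a | n'.+1 => env n' end.

Fixpoint eval (env : nat -> carrier M) (t : term) : carrier M :=
  match t with
  | Var n => env n
  | App f ts => ifun (fun i => eval env (ts i))
  end.

(* Satisfaction in the substructure of M with domain B (quantifiers range
   over B; atomic formulas are interpreted by restriction of M). *)
Fixpoint sat_in (B : set (carrier M)) (env : nat -> carrier M) (phi : form)
  : Prop :=
  match phi with
  | FFalse => False
  | FEq t1 t2 => eval env t1 = eval env t2
  | FRel r ts => irel (fun i => eval env (ts i))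
  | FNot p => ~ sat_in B env p
  | FAnd p q => sat_in B env p /\ sat_in B env q
  | FOr p q => sat_in B env p \/ sat_in B env q
  | FImp p q => sat_in B env p -> sat_in B env q
  | FAll p => forall a, B a -> sat_in B (scons a env) p
  | FEx p => exists2 a, B a & sat_in B (scons a env) p
  end.

Definition sub_closed (B : set (carrier M)) : Prop :=
  forall (f : funsym sg) (args : 'I_(farity f) -> carrier M),
    (forall i, B (args i)) -> B (ifun args).

(* The substructure with domain B satisfies the theory T
   (T consists of sentences, so the environment is irrelevant). *)
Definition sub_models (B : set (carrier M)) (T : set form) : Prop :=
  forall phi, T phi -> forall env : nat -> carrier M, sat_in B env phi.

(* Sub(M, T): substructures of M (identified with their domains, which
   determine them uniquely) that are models of T. *)
Definition SubModels (T : set form) : set (set (carrier M)) :=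
  [set B | sub_closed B /\ sub_models B T].

End Semantics.
End FOL.

Arguments Var {sg}.
Arguments SubModels {sg} M T.

From Stdlib Require List.
From mathcomp Require Import all_boot.
From mathcomp Require Import boolp classical_sets cardinality.
From mathcomp Require Import zify.

(* A substructure is determined by its domain B, a point of the Cantor space
   2^A, whose basic open sets are the cylinders [cyl K B] of all sets agreeing
   with B on the elements of code < K.  Closure under the function symbols is
   a closed condition.  A Pi_2 sentence forall xs, exists ys, psi holds in B
   iff for every tuple xs the instance "xs in B -> some ys in B witness psi" holds,
   and each instance is open: finitely many witnesses suffice, and psi, being
   quantifier-free, is evaluated in A.  As there are countably many instances,
   Sub(A, T) is a G_delta subset of 2^A.  An uncountable G_delta set contains a
   Cantor scheme: shrink a cylinder meeting it uncountably into the next open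
   condition, then split it at a point where both halves stay uncountable; the
   branches of the scheme converge to 2^aleph_0 distinct members. *)

Local Open Scope classical_set_scope.

Lemma countable_subset {T} {A B : set T} : A `<=` B -> countable B -> countable A.
Proof. by move=> /subset_card_le; apply: sub_countable. Qed.

Lemma countableU T (A B : set T) :
  countable A -> countable B -> countable (A `|` B).
Proof. by move=> cA cB; rewrite -bigcup2E; apply: bigcup_countable => // -[|[|n]]. Qed.

Lemma countable_injT T : countable [set: T] -> exists f : T -> nat, injective f.
Proof.
by move=> /countable_injP[f f_inj]; exists f => x y; apply: f_inj; rewrite inE.
Qed.

Lemma powerset_card_le {T U} {f : T -> U} :
  injective f -> ([set: set T] #<= [set: set U])%card.
Proof.
move=> f_inj; apply/pcard_injP; exists (image^~ f) => A B _ _ AB.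
apply/seteqP; split=> x Ax.
  by have [y By /f_inj <-] : (f @` B) (f x) by rewrite -AB; exists x.
by have [y Ay /f_inj <-] : (f @` A) (f x) by rewrite AB; exists x.
Qed.

Section CantorSpace.
Context {X : Type} (code : X -> nat).
Hypothesis code_inj : injective code.

Definition cyl (K : nat) (B : set X) : set (set X) :=
  [set B' | forall x, (code x < K)%N -> B' x <-> B x].

Definition cyl_open (U : set (set X)) := forall B, U B -> exists K, cyl K B `<=` U.

Definition cyl_closed (F : set (set X)) :=
  forall B, (forall K, F `&` cyl K B !=set0) -> F B.

Lemma cyl_refl K B : cyl K B B. Proof. by []. Qed.

Lemma cyl_sym {K B B'} : cyl K B B' -> cyl K B' B.
Proof. by move=> BB' x xK; rewrite BB'. Qed.

Lemma cyl_nested {K K' B B'} : (K <= K')%N -> cyl K B B' -> cyl K' B' `<=` cyl K B.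
Proof.
by move=> KK' BB' B'' B'B'' x xK; rewrite B'B'' ?BB' //; apply: leq_trans KK'.
Qed.

Lemma cyl_le {K K'} B : (K <= K')%N -> cyl K' B `<=` cyl K B.
Proof. by move=> KK'; apply: cyl_nested KK' (cyl_refl K B). Qed.

Lemma cyl_open_fiber {I} {enc : I -> nat} {V : I -> set (set X)} :
  injective enc -> (forall i, cyl_open (V i)) ->
  forall k, cyl_open (\bigcap_(i in enc @^-1` [set k]) V i).
Proof.
move=> enc_inj Vopen k B VB.
have [[i ik]|nok] := pselect (exists i, enc i = k); last first.
  by exists 0 => B' _ i ik; case: nok; exists i.
have [K KV] := Vopen i B (VB i ik).
by exists K => B' /KV V'B' j; rewrite -ik => /enc_inj ->.
Qed.

Lemma cyl_open_imply (P : Prop) U : (P -> cyl_open U) -> cyl_open [set B | P -> U B].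
Proof.
move=> PU B PUB; have [p|np] := pselect P; last by exists 0 => B' _ /np.
by have [K KU] := PU p B (PUB p); exists K => B' /KU UB' _.
Qed.

Lemma Forall_cyl (s : seq X) :
  exists K, forall B B', cyl K B B' -> List.Forall B s -> List.Forall B' s.
Proof.
elim: s => [|x s [K sK]]; first by exists 0 => B B' _ _; constructor.
exists (maxn K (code x).+1) => B B' BB' /List.Forall_cons_iff[Bx Bs].
constructor; first by apply/(BB' x (leq_maxr _ _)).
exact: sK (cyl_le _ (leq_maxl _ _) _ BB') Bs.
Qed.

Lemma cyl_open_Forall_imply s U :
  cyl_open U -> cyl_open [set B | List.Forall B s -> U B].
Proof.
move=> Uopen B sU; have [Bs|nBs] := pselect (List.Forall B s).
  by have [K KU] := Uopen B (sU Bs); exists K => B' /KU UB' _.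
have [K sK] := Forall_cyl s.
by exists K => B' BB' /(sK _ _ (cyl_sym BB')).
Qed.

Definition trace (K : nat) (B : set X) : seq bool :=
  mkseq (fun i => `[< exists2 x, code x = i & B x >]) K.

Lemma trace_cyl K B B' : trace K B' = trace K B -> cyl K B B'.
Proof.
move=> e x xK.
have BB' : (exists2 y, code y = code x & B' y) <-> (exists2 y, code y = code x & B y).
  apply: asbool_eq_equiv.
  by have := congr1 (nth false ^~ (code x)) e; rewrite !nth_mkseq.
split=> [B'x | Bx].
  by have [y /code_inj -> //] := BB'.1 (ex_intro2 _ _ x erefl B'x).
by have [y /code_inj -> //] := BB'.2 (ex_intro2 _ _ x erefl Bx).
Qed.

(* Z is covered by its traces on level K, of which there are countably many. *)
Lemma exists_uncountable_cyl {Z : set (set X)} K :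
  ~ countable Z -> exists2 B, Z B & ~ countable (Z `&` cyl K B).
Proof.
move=> Zunc; apply: contra_notP Zunc => /forall2NP Zcyl.
apply: (countable_subset
  (B := \bigcup_(s in [set: seq bool]) (Z `&` trace K @^-1` [set s]))).
  by move=> B ZB; exists (trace K B).
apply: bigcup_countable => // s _.
have [[B [ZB <-]] | Zs0] := pselect (exists B, Z B /\ trace K B = s); last first.
  by apply: (countable_subset (B := set0)) => // B [ZB Bs]; apply: Zs0; exists B.
have [//|/contrapT] := Zcyl B; apply: countable_subset => B' [ZB' B's].
by split=> //; apply: trace_cyl.
Qed.

(* Otherwise every member of Z but countably many equals the set of points
   lying in uncountably many members of Z. *)
Lemma exists_splitting_point {Z : set (set X)} : ~ countable Z ->
  exists x, ~ countable (Z `&` [set B | B x]) /\ ~ countable (Z `&` [set B | ~ B x]).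
Proof.
move=> Zunc; apply: contra_notP Zunc => nosplit.
pose Zin x := Z `&` [set B | B x]; pose Zout x := Z `&` [set B | ~ B x].
pose Bmaj : set X := [set x | ~ countable (Zin x)].
have countable_index (D : set X) : countable D.
  by apply/countable_injP; exists code => x y _ _ /code_inj.
apply: (countable_subset (B := [set Bmaj]
  `|` (\bigcup_(x in [set x | countable (Zin x)]) Zin x
  `|` \bigcup_(x in [set x | countable (Zout x)]) Zout x))).
  move=> B ZB; have [->|BBmaj] := pselect (B = Bmaj); [by left | right].
  have [x Bx_Bmajx] : exists x, ~ (B x <-> Bmaj x).
    apply: contra_notP BBmaj => eqB; apply/funext => x; apply/propext.
    by apply: contra_notP eqB; exists x.
  have [Bx|nBx] := pselect (B x).
    have /contrapT cZin : ~ Bmaj x by move=> Bmx; apply: Bx_Bmajx.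
    by left; exists x.
  have Bmx : Bmaj x by apply: contra_notP Bx_Bmajx => nBmx.
  have cZout : countable (Zout x) by apply: contra_notP nosplit; exists x.
  by right; exists x.
apply: countableU; first exact: countable1.
by apply: countableU; apply: bigcup_countable.
Qed.

Lemma exists_uncountable_cyl_sub_open {Z U : set (set X)} :
  ~ countable Z -> cyl_open U -> Z `<=` U ->
  exists K, exists2 B, cyl K B `<=` U & ~ countable (Z `&` cyl K B).
Proof.
move=> Zunc Uopen ZU.
pose ZK K := Z `&` [set B | cyl K B `<=` U].
have [K ZKunc] : exists K, ~ countable (ZK K).
  apply: contra_notP Zunc => /forallNP/(_ _)/contrapT ZKc.
  apply: (countable_subset (B := \bigcup_(K in [set: nat]) ZK K)).
    by move=> B /[dup] /ZU /Uopen [K BKU] ZB; exists K.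
  exact: bigcup_countable.
have [B [_ BKU] ZKBunc] := exists_uncountable_cyl K ZKunc.
exists K, B => //; apply: contra_not ZKBunc; apply: countable_subset.
by move=> B' [[ZB' _] BB'].
Qed.

Section PerfectSet.
Context {I : Type} {enc : I -> nat} {F : set (set X)} {U : I -> set (set X)}.
Hypotheses (enc_inj : injective enc) (F_closed : cyl_closed F).
Hypothesis U_open : forall i, cyl_open (U i).
Local Notation S := (F `&` [set B | forall i, U i B]).

(* A pair p = (K, B) stands for the cylinder [cyl K B]. *)
Definition thick (p : nat * set X) := ~ countable (S `&` cyl p.1 p.2).

Definition refines k (p q : nat * set X) :=
  [/\ thick q, (k < q.1)%N &
      cyl q.1 q.2 `<=` cyl p.1 p.2 `&` \bigcap_(i in enc @^-1` [set k]) U i].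

Definition separates (q q' : nat * set X) :=
  exists x, [/\ (code x < q.1)%N, (code x < q'.1)%N, q.2 x & ~ q'.2 x].

Lemma thick_split k p : thick p -> exists c : bool -> nat * set X,
  (forall b, refines k p (c b)) /\ separates (c true) (c false).
Proof.
move=> pthick; set Z := S `&` cyl p.1 p.2 in pthick.
have ZU : Z `<=` \bigcap_(i in enc @^-1` [set k]) U i by move=> B' [[_ UB'] _] i _.
have [K [B BU ZBunc]] :=
  exists_uncountable_cyl_sub_open pthick (cyl_open_fiber enc_inj U_open k) ZU.
have [x [Inunc Outunc]] := exists_splitting_point ZBunc.
pose K1 := p.1 + K + k.+1 + (code x).+1.
have child (Q : set (set X)) : Q `<=` Z `&` cyl K B -> ~ countable Q ->
    exists2 B1, Q B1 & refines k p (K1, B1).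
  move=> QZ Qunc; have [B1 QB1 QB1unc] := exists_uncountable_cyl K1 Qunc.
  exists B1 => //; split=> /=.
  - apply: contra_not QB1unc; apply: countable_subset => B' [/QZ[[SB' _] _] B1B'].
    by split.
  - lia.
  - have [[_ pB1] KB1] := QZ _ QB1.
    have pK1 : (p.1 <= K1)%N by lia.
    have KK1 : (K <= K1)%N by lia.
    move=> B' B1B'; split; first exact: (cyl_nested pK1 pB1).
    exact/BU/(cyl_nested KK1 KB1).
have [B1 [_ B1x] B1ref] := child _ (@subIsetl _ _ _) Inunc.
have [B2 [_ B2x] B2ref] := child _ (@subIsetl _ _ _) Outunc.
exists (fun b => if b then (K1, B1) else (K1, B2)); split; first by case.
by exists x; split=> //=; lia.
Qed.

Lemma exists_splitting_scheme :
  exists next : nat -> nat * set X -> bool -> nat * set X,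
  (forall k p b, thick p -> refines k p (next k p b)) /\
  (forall k p, thick p -> separates (next k p true) (next k p false)).
Proof.
have split_ex (kp : nat * (nat * set X)) : exists c : bool -> nat * set X,
    thick kp.2 -> (forall b, refines kp.1 kp.2 (c b)) /\ separates (c true) (c false).
  have [/(thick_split kp.1)[c cP]|thin] := pselect (thick kp.2); first by exists c.
  by exists (fun=> (0, set0)).
have [split splitP] := choice split_ex.
exists (fun k p => split (k, p)).
by split=> [k p b /(splitP (k, p))[refs _] | k p /(splitP (k, p))[]].
Qed.

Section Branches.
Variable next : nat -> nat * set X -> bool -> nat * set X.
Hypothesis next_refines : forall k p b, thick p -> refines k p (next k p b).
Hypothesis next_separates :
  forall k p, thick p -> separates (next k p true) (next k p false).
Variable root : nat * set X.
Hypothesis root_thick : thick root.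

Fixpoint branch (al : nat -> bool) (n : nat) : nat * set X :=
  if n is n'.+1 then next n' (branch al n') (al n') else root.

Lemma branch_thick al n : thick (branch al n).
Proof. by elim: n => //= n IH; have [] := next_refines n _ (al n) IH. Qed.

Lemma branch_refines al n : refines n (branch al n) (branch al n.+1).
Proof. exact: next_refines (branch_thick al n). Qed.

Lemma branch_cyl_sub al {m n} : (m <= n)%N ->
  cyl (branch al n).1 (branch al n).2 `<=` cyl (branch al m).1 (branch al m).2.
Proof.
elim: n => [|n IH]; first by rewrite leqn0 => /eqP->.
rewrite leq_eqVlt ltnS => /orP[/eqP-> //|mn B nB].
by have [_ _ sub] := branch_refines al n; apply: IH mn B (sub B nB).1.
Qed.

Lemma branch_eq {al be n} :
  (forall m, (m < n)%N -> al m = be m) -> branch al n = branch be n.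
Proof.
elim: n => //= n IH eq_lt.
have -> : branch al n = branch be n by apply: IH => m /ltnW; apply: eq_lt.
by rewrite eq_lt.
Qed.

(* Past level (code x).+1 the branch no longer changes its mind about x. *)
Definition limit (al : nat -> bool) : set X := fun x => (branch al (code x).+1).2 x.

Lemma limit_cyl al n : cyl (branch al n).1 (branch al n).2 (limit al).
Proof.
move=> x xn; have [_ x_lt _] := branch_refines al (code x).
have Bm_n := branch_cyl_sub al (leq_maxl n (code x).+1) _ (cyl_refl _ _).
have Bm_x := branch_cyl_sub al (leq_maxr n (code x).+1) _ (cyl_refl _ _).
by rewrite /limit -(Bm_x x x_lt) (Bm_n x xn).
Qed.

Lemma limit_in al : S (limit al).
Proof.
split=> [|i]; last first.
  have [_ _ sub] := branch_refines al (enc i).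
  exact: (sub _ (limit_cyl al (enc i).+1)).2 i erefl.
apply: F_closed => K.
have [B' [[FB' _] pB']] : S `&` cyl (branch al K.+1).1 (branch al K.+1).2 !=set0.
  by apply: contra_notP (branch_thick al K.+1) => /nonemptyPn ->.
exists B'; split=> // x xK.
have [_ K_lt _] := branch_refines al K.
have x_lt := ltn_trans xK K_lt.
by rewrite (pB' x x_lt) (limit_cyl al K.+1 x x_lt).
Qed.

Lemma limit_inj : injective limit.
Proof.
move=> al be eq_lim; apply/funext => n; elim/ltn_ind: n => n IH.
have /= lim_al := limit_cyl al n.+1; have /= lim_be := limit_cyl be n.+1.
rewrite (branch_eq IH) in lim_al.
have [x [xt xf Btx nBfx]] := next_separates n _ (branch_thick be n).
case: (al n) (be n) lim_al lim_be => [] [] //= lim_al lim_be.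
  by case: nBfx; rewrite -(lim_be x xf) -eq_lim (lim_al x xt).
by case: nBfx; rewrite -(lim_al x xf) eq_lim (lim_be x xt).
Qed.

End Branches.

Theorem Gdelta_perfect_set : ~ countable S -> ([set: set nat] #<= S)%card.
Proof.
move=> Sunc; have [next [next_refines next_separates]] := exists_splitting_scheme.
have root_thick : thick (0, set0).
  by apply: contra_not Sunc; apply: countable_subset => B SB.
pose L (A : set nat) := limit next (0, set0) (fun n => `[< A n >]).
apply/pcard_leP/injfunPex; exists L => [A _|A A' _ _ /limit_inj eqA].
  exact: limit_in.
apply/funext => n; apply/propext; apply: asbool_eq_equiv.
by have /(congr1 (fun al => al n)) := eqA next_refines next_separates root_thick.
Qed.

End PerfectSet.
End CantorSpace.

Section FormulaCode.
Context {sg : signature} (cf : funsym sg -> nat) (cr : relsym sg -> nat).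
Hypotheses (cf_inj : injective cf) (cr_inj : injective cr).

Fixpoint term_tree (t : term sg) : GenTree.tree nat :=
  match t with
  | Var n => GenTree.Leaf n
  | App f ts => GenTree.Node (cf f) [seq term_tree (ts i) | i <- enum 'I_(farity f)]
  end.

Lemma term_tree_inj : injective term_tree.
Proof.
elim=> [n|f ts IH] [m|g us] //=; first by case=> ->.
case=> /cf_inj fg; subst g => /eq_in_map ts_us.
by congr App; apply/funext => i; apply/IH/ts_us; rewrite mem_enum.
Qed.

Fixpoint form_tree (p : form sg) : GenTree.tree nat :=
  match p with
  | FFalse => GenTree.Node 0 [::]
  | FEq t1 t2 => GenTree.Node 1 [:: term_tree t1; term_tree t2]
  | FRel r ts => GenTree.Node 2
      (GenTree.Leaf (cr r) :: [seq term_tree (ts i) | i <- enum 'I_(rarity r)])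
  | FNot p => GenTree.Node 3 [:: form_tree p]
  | FAnd p q => GenTree.Node 4 [:: form_tree p; form_tree q]
  | FOr p q => GenTree.Node 5 [:: form_tree p; form_tree q]
  | FImp p q => GenTree.Node 6 [:: form_tree p; form_tree q]
  | FAll p => GenTree.Node 7 [:: form_tree p]
  | FEx p => GenTree.Node 8 [:: form_tree p]
  end.

Lemma form_tree_inj : injective form_tree.
Proof.
elim=> [|t1 t2|r ts|p IH|p IHp q IHq|p IHp q IHq|p IHp q IHq|p IH|p IH]
  [|u1 u2|r' us|p'|p' q'|p' q'|p' q'|p'|p'] //=;
  try by [case=> /IH -> | case=> /IHp -> /IHq ->].
- by case=> /term_tree_inj -> /term_tree_inj ->.
- case=> /cr_inj rr'; subst r' => /eq_in_map ts_us.
  by congr FRel; apply/funext => i; apply/term_tree_inj/ts_us; rewrite mem_enum.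
Qed.

End FormulaCode.

Section Substructures.
Context {sg : signature} {M : structure sg}.
Local Notation X := (carrier M).

(* The last element of s becomes de Bruijn variable 0. *)
Fixpoint scons_seq (s : seq X) (env : nat -> X) : nat -> X :=
  if s is a :: s' then scons_seq s' (scons a env) else env.

Lemma sat_in_iter_FAll (B : set X) (chi : form sg) n env :
  sat_in B env (iter n (@FAll sg) chi) <->
  forall s, size s = n -> List.Forall B s -> sat_in B (scons_seq s env) chi.
Proof.
elim: n env => [|n IH] env /=.
  by split=> [chi_env [|//] | /(_ [::] erefl (List.Forall_nil _))].
split=> [all_a [//|a s] [size_s] /List.Forall_cons_iff[Ba Bs] | all_s a Ba].
  exact: (IH _).1 (all_a a Ba) s size_s Bs.
by apply/IH => s size_s Bs; apply: (all_s (a :: s)); [rewrite /= size_s | constructor].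
Qed.

Lemma sat_in_iter_FEx (B : set X) (chi : form sg) n env :
  sat_in B env (iter n (@FEx sg) chi) <->
  exists s, [/\ size s = n, List.Forall B s & sat_in B (scons_seq s env) chi].
Proof.
elim: n env => [|n IH] env /=.
  by split=> [chi_env | [s [/size0nil -> _ //]]]; exists [::].
split=> [[a Ba /IH[s [size_s Bs chi_s]]] | [[|a s] [//= [size_s]]]].
  by exists (a :: s); split=> //=; [rewrite size_s | constructor].
move=> /List.Forall_cons_iff[Ba Bs] chi_s.
by exists a => //; apply/(IH (scons a env)); exists s.
Qed.

Lemma sat_in_qfree (B B' : set X) env (p : form sg) :
  qfree p -> sat_in B env p <-> sat_in B' env p.
Proof.
elim: p env => //=.
- by move=> p IH env /IH ->.
- by move=> p IHp q IHq env [/IHp -> /IHq ->].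
- by move=> p IHp q IHq env [/IHp -> /IHq ->].
- by move=> p IHp q IHq env [/IHp -> /IHq ->].
Qed.

Lemma eval_env_bound {k} {t : term sg} {e e' : nat -> X} : term_bound k t ->
  (forall i, (i < k)%N -> e i = e' i) -> eval e t = eval e' t.
Proof.
elim: t => [n|f ts IH] /= tk ee'; first exact: ee'.
by congr ifun; apply/funext => i; apply: IH.
Qed.

Lemma sat_in_env_bound (B : set X) k (p : form sg) (e e' : nat -> X) :
  form_bound k p -> (forall i, (i < k)%N -> e i = e' i) ->
  (sat_in B e p <-> sat_in B e' p).
Proof.
elim: p k e e' => //=.
- move=> t1 t2 k e e' [t1k t2k] ee'.
  by rewrite (eval_env_bound t1k ee') (eval_env_bound t2k ee').
- move=> r ts k e e' tsk ee'.
  suff -> : (fun i => eval e (ts i)) = (fun i => eval e' (ts i)) by [].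
  by apply/funext => i; apply: eval_env_bound (tsk i) ee'.
- by move=> p IH k e e' pk ee'; rewrite (IH k e e').
- by move=> p IHp q IHq k e e' [pk qk] ee'; rewrite (IHp k e e') ?(IHq k e e').
- by move=> p IHp q IHq k e e' [pk qk] ee'; rewrite (IHp k e e') ?(IHq k e e').
- by move=> p IHp q IHq k e e' [pk qk] ee'; rewrite (IHp k e e') ?(IHq k e e').
- move=> p IH k e e' pk ee'.
  have {}IH a : sat_in B (scons a e) p <-> sat_in B (scons a e') p.
    by apply: IH pk _ => -[|i] //= /ee'.
  by split=> all_a a /all_a /IH.
- move=> p IH k e e' pk ee'.
  have {}IH a : sat_in B (scons a e) p <-> sat_in B (scons a e') p.
    by apply: IH pk _ => -[|i] //= /ee'.
  by split=> -[a Ba /IH]; exists a.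
Qed.

Lemma cyl_open_sat_exists (code : X -> nat) m psi env : qfree psi ->
  cyl_open code [set B | sat_in B env (iter m (@FEx sg) psi)].
Proof.
move=> qpsi B /sat_in_iter_FEx[s [size_s Bs psi_s]].
have [K sK] := Forall_cyl code s.
exists K => B' BB'; apply/sat_in_iter_FEx; exists s; split=> //.
  exact: sK BB' Bs.
exact/(sat_in_qfree B).
Qed.

Lemma cyl_closed_sub_closed (code : X -> nat) : cyl_closed code (@sub_closed sg M).
Proof.
move=> B Bclosed f args Bargs.
pose K := (maxn (\max_(i < farity f) code (args i)) (code (ifun args))).+1.
have [B' [B'closed BB']] := Bclosed K.
apply/(BB' _ _); first by rewrite ltnS leq_maxr.
apply: B'closed => i; apply/(BB' _ _) => //.
by rewrite ltnS leq_max (leq_bigmax i).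
Qed.

Section Requirements.
Variables (T : set (form sg)) (env0 : nat -> X).

(* The instance at the tuple s of the Pi_2 sentence with size s universal
   quantifiers; env0 is irrelevant for sentences. *)
Definition requirement (i : nat * form sg * seq X) : set (set X) :=
  let: (m, psi, s) := i in
  [set B | T (iter (size s) (@FAll sg) (iter m (@FEx sg) psi)) -> qfree psi ->
           List.Forall B s -> sat_in B (scons_seq s env0) (iter m (@FEx sg) psi)].

Lemma cyl_open_requirement code i : cyl_open code (requirement i).
Proof.
case: i => [[m psi] s]; apply: cyl_open_imply => _; apply: cyl_open_imply => qpsi.
exact/cyl_open_Forall_imply/cyl_open_sat_exists.
Qed.

Lemma SubModels_requirements : (forall phi, T phi -> Pi2_sentence phi) ->
  SubModels M T = sub_closed (M := M) `&` [set B | forall i, requirement i B].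
Proof.
move=> T_Pi2; apply/seteqP; split=> B [Bclosed BT]; split=> //.
  move=> [[m psi] s] Tphi _ Bs.
  by have /sat_in_iter_FAll := BT _ Tphi env0; apply.
move=> phi Tphi env; have [phi_sent [n [m [psi [qpsi phiE]]]]] := T_Pi2 _ Tphi.
apply/(sat_in_env_bound B 0 phi env env0 phi_sent) => //.
rewrite phiE; apply/sat_in_iter_FAll => s size_s Bs.
by apply: (BT (m, psi, s)); rewrite // size_s -phiE.
Qed.

End Requirements.
End Substructures.

Theorem corollary5p63 (sg : signature) (M : structure sg) (T : set (form sg)) :
  countable [set: funsym sg] ->
  countable [set: relsym sg] ->
  countable [set: carrier M] ->
  (forall phi, T phi -> Pi2_sentence phi) ->
  countable (SubModels M T) \/ (SubModels M T #= [set: set nat])%card.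
Proof.
move=> /countable_injT[cf cf_inj] /countable_injT[cr cr_inj].
move=> /countable_injT[code code_inj] T_Pi2.
have [[x0 _]|noX] := pselect (exists x : carrier M, True); last first.
  left; apply: (countable_subset (B := [set set0])) => [B _|]; last exact: countable1.
  by apply/funext => x; case: noX; exists x.
have [|Sunc] := pselect (countable (SubModels M T)); [by left | right].
apply: Cantor_Bernstein.
  exact: card_le_trans (card_leT _) (powerset_card_le code_inj).
pose enc (i : nat * form sg * seq (carrier M)) :=
  pickle (i.1.1, form_tree cf cr i.1.2, map code i.2).
have enc_inj : injective enc.
  move=> [[m psi] s] [[m' psi'] s'] /(pcan_inj pickleK)[->].
  by move=> /(form_tree_inj _ _ cf_inj cr_inj) -> /(inj_map code_inj) ->.
rewrite (SubModels_requirements T (fun=> x0) T_Pi2) in Sunc *.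
exact (Gdelta_perfect_set code code_inj enc_inj (cyl_closed_sub_closed code)
  (cyl_open_requirement T (fun=> x0) code) Sunc).
Qed.
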